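(* Let $\Sigma$ be an oriented graph on $n$ vertices with skew adjacency matrix $S$ and walk-matrix $W=W(\Sigma)$, and suppose $W$ is nonsingular. Let $Q$ be a real orthogonal matrix with $Qe=e$ and $Q^{\mathrm T}SQ=S^{\mathrm T}$. Then $Q$ is symmetric. In particular, if $P$ is a permutation matrix with $P^{\mathrm T}SP=S^{\mathrm T}$, then $P$ is symmetric and $P^2=I_n$.
   Context: The skew adjacency matrix $S=(S_{ij})$ of an oriented graph on vertices $v_1,\dots,v_n$ has $S_{ij}=1$ if $(v_i,v_j)$ is a directed edge, $S_{ij}=-1$ if $(v_j,v_i)$ is a directed edge, and $S_{ij}=0$ otherwise. The walk-matrix is $W(\Sigma)=[e,Se,\ldots,S^{n-1}e]$ with $e$ the all-ones vector. *)

From HB Require Import structures.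
From mathcomp Require Import all_boot all_order all_algebra.
From mathcomp Require Import reals.
Set Implicit Arguments. Unset Strict Implicit. Unset Printing Implicit Defensive.
Import GRing.Theory Num.Theory.
Local Open Scope ring_scope.

Definition oriented_graph (n : nat) (E : rel 'I_n) : Prop :=
  (forall i, ~~ E i i) /\ (forall i j, ~~ (E i j && E j i)).

Definition skew_adj (R : pzRingType) (n : nat) (E : rel 'I_n) : 'M[R]_n :=
  \matrix_(i, j) ((E i j)%:R - (E j i)%:R).

Definition ones (R : pzRingType) (n : nat) : 'cV[R]_n := const_mx 1.

Definition walk_matrix (R : pzRingType) (n : nat) (S : 'M[R]_n) : 'M[R]_n :=
  \matrix_(i, j) ((S ^+ j *m ones R n) i ord0).

Definition orthogonal_mx (R : pzRingType) (n : nat) (Q : 'M[R]_n) : Prop :=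
  Q^T *m Q = 1%:M.

(* Since S^T = -S, the hypothesis Q^T S Q = S^T says that the orthogonal matrix
   Q anticommutes with S, hence so does Q^T = Q^-1. An anticommuting matrix
   fixing e sends the column S^j e of W to (-1)^j S^j e, so
   Q W = W D = Q^T W with D = diag(1, -1, 1, ...), and cancelling the
   invertible W gives Q = Q^T. Permutation matrices are orthogonal and fix e. *)
From HB Require Import structures.
From mathcomp Require Import all_boot all_order all_algebra.
From mathcomp Require Import reals.
From mathcomp Require Import perm.
Set Implicit Arguments. Unset Strict Implicit. Unset Printing Implicit Defensive.
Import GRing.Theory Num.Theory.
Local Open Scope ring_scope.

Lemma tr_skew_adj (R : pzRingType) (n : nat) (E : rel 'I_n) :
  (skew_adj R E)^T = - skew_adj R E.
Proof. by apply/matrixP => i j; rewrite !mxE opprB. Qed.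

Section Anticommuting.

Variables (R : pzRingType) (n : nat) (S M : 'M[R]_n).
Hypothesis anticomm_MS : M *m S = - (S *m M).

Lemma anticomm_mulmx_exp (j : nat) : M *m S ^+ j = (-1) ^+ j *: (S ^+ j *m M).
Proof.
elim: j => [|j IHj]; first by rewrite !expr0 scale1r mulmx1 mul1mx.
rewrite !exprSr -[_ * S]/(_ *m S) mulmxA IHj -scalemxAl -mulmxA anticomm_MS.
by rewrite mulmxN mulmxA -scalerA scaleN1r.
Qed.

Definition alternating_diag : 'M[R]_n := diag_mx (\row_(j < n) (-1) ^+ j).

Lemma mulmx_walk_matrixE (A : 'M[R]_n) i j :
  (A *m walk_matrix S) i j = (A *m (S ^+ j *m ones R n)) i ord0.
Proof. by rewrite !mxE; apply: eq_bigr => k _; rewrite mxE. Qed.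

Lemma anticomm_mul_walk_matrix :
  M *m ones R n = ones R n -> M *m walk_matrix S = walk_matrix S *m alternating_diag.
Proof.
move=> fix_e; apply/matrixP => i j.
rewrite mulmx_walk_matrixE mulmxA anticomm_mulmx_exp -scalemxAl -mulmxA fix_e.
by rewrite mul_mx_diag !mxE commr_sign.
Qed.

End Anticommuting.

Section Orthogonal.

Variables (R : comPzRingType) (n : nat) (S Q : 'M[R]_n).
Hypothesis orthoQ : orthogonal_mx Q.

Lemma mulmx_tr_orthogonal : Q *m Q^T = 1%:M.
Proof. exact: mulmx1C. Qed.

Lemma orthogonal_conj_anticomm : Q^T *m S *m Q = - S -> Q *m S = - (S *m Q).
Proof.
move=> conjS; have : Q *m (Q^T *m S *m Q) = - (Q *m S) by rewrite conjS mulmxN.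
by rewrite !mulmxA mulmx_tr_orthogonal mul1mx => ->; rewrite opprK.
Qed.

Lemma anticomm_tr_orthogonal : Q *m S = - (S *m Q) -> Q^T *m S = - (S *m Q^T).
Proof.
move=> anticomm_QS; have anticomm_SQ : S *m Q = - (Q *m S) by rewrite anticomm_QS opprK.
rewrite -[Q^T *m S]mulmx1 -mulmx_tr_orthogonal mulmxA -(mulmxA _ S) anticomm_SQ.
by rewrite mulmxN mulmxA orthoQ mul1mx mulNmx.
Qed.

Lemma orthogonal_tr_fix (v : 'cV[R]_n) : Q *m v = v -> Q^T *m v = v.
Proof. by move=> fix_v; rewrite -{1}fix_v mulmxA orthoQ mul1mx. Qed.

End Orthogonal.

Lemma tr_orthogonal_conj_skew (R : comUnitRingType) (n : nat) (S Q : 'M[R]_n) :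
  S^T = - S -> walk_matrix S \in unitmx ->
  orthogonal_mx Q -> Q *m ones R n = ones R n -> Q^T *m S *m Q = S^T ->
  Q^T = Q.
Proof.
move=> skewS unitW orthoQ fix_e; rewrite skewS => /(orthogonal_conj_anticomm orthoQ).
move=> anticomm_QS; have anticomm_QtS := anticomm_tr_orthogonal orthoQ anticomm_QS.
apply: (can_inj (mulmxK unitW)).
rewrite (anticomm_mul_walk_matrix anticomm_QS fix_e).
by rewrite (anticomm_mul_walk_matrix anticomm_QtS (orthogonal_tr_fix orthoQ fix_e)).
Qed.

Lemma perm_mx_orthogonal (R : comPzRingType) (n : nat) (s : 'S_n) :
  orthogonal_mx (perm_mx s : 'M[R]_n).
Proof. by rewrite /orthogonal_mx tr_perm_mx -perm_mxM mulVg perm_mx1. Qed.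

Lemma perm_mx_ones (R : pzRingType) (n : nat) (s : 'S_n) :
  perm_mx s *m ones R n = ones R n.
Proof. by rewrite -row_permE; apply/matrixP => i j; rewrite !mxE. Qed.

Theorem lemma2p10 (R : realType) (n : nat) (E : rel 'I_n) :
  oriented_graph E ->
  walk_matrix (skew_adj R E) \in unitmx ->
  (forall Q : 'M[R]_n,
      orthogonal_mx Q ->
      Q *m ones R n = ones R n ->
      Q^T *m skew_adj R E *m Q = (skew_adj R E)^T ->
      Q^T = Q)
  /\
  (forall s : 'S_n,
      let P : 'M[R]_n := perm_mx s in
      P^T *m skew_adj R E *m P = (skew_adj R E)^T ->
      P^T = P /\ P *m P = 1%:M).
Proof.
(* [skew_adj R E] is skew-symmetric for every relation E. *)
move=> _ unitW.
have symQ Q := @tr_orthogonal_conj_skew R n _ Q (tr_skew_adj R E) unitW.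
split=> [// | s P conjS].
have symP : P^T = P := symQ P (perm_mx_orthogonal R s) (perm_mx_ones R s) conjS.
by split=> //; rewrite -{1}symP; apply: perm_mx_orthogonal.
Qed.
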